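(* Let $\mathcal{R}$ be an LCTRS all of whose rules $\ell\to r~[\varphi]$ satisfy $\mathcal{V}ar(r)\subseteq\mathcal{V}ar(\ell,\varphi)$ and are left-value-free and left-TV-linear. For constrained $\exists$-terms $(\exists\vec{x}:\eta.\ s)~[\phi]$ and $(\exists\vec{y}:\delta.\ t)~[\psi]$ with $\{\vec{x}\}\cap\mathcal{V}ar(\phi)=\emptyset$ and $\{\vec{y}\}\cap\mathcal{V}ar(\psi)=\emptyset$, if $(\exists\vec{x}:\eta.\ s)~[\phi]\rightharpoonup_{\mathcal{R}}(\exists\vec{y}:\delta.\ t)~[\psi]$, then both of the following hold: (1) for every substitution $\theta$ respecting $\phi\land\eta$, there exists a substitution $\sigma$ respecting $\psi\land\delta$ such that $s\theta\to_{\mathcal{R}} t\sigma$; (2) for every substitution $\sigma$ respecting $\psi\land\delta$, there exists a substitution $\theta$ respecting $\phi\land\eta$ such that $s\theta\to_{\mathcal{R}} t\sigma$.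
   Context: LCTRS setting: signature $\Sigma=\Sigma_{\mathit{theory}}\cup\Sigma_{\mathit{terms}}$, theory symbols interpreted over universes, $\mathrm{Val}$ the value constants, theory includes $\mathsf{bool}$, connectives and $=$ interpreted as usual; constraints are theory terms of sort $\mathsf{bool}$, $[\![\cdot]\!]$ evaluates ground theory terms. A substitution $\gamma$ respects constraint $\phi$ if $x\gamma\in\mathrm{Val}$ for $x\in\mathcal{V}ar(\phi)$ and $[\![\phi\gamma]\!]=\mathsf{true}$. $\phi\Rightarrow(\exists\vec{z}.\ \psi)$ (for constraints $\phi,\psi$) is valid iff for every substitution $\gamma$ mapping $\mathcal{V}ar(\phi)\cup(\mathcal{V}ar(\psi)\setminus\{\vec z\})$ to values there is $\gamma'$ with $\mathcal{D}om(\gamma')=\{\vec z\}$, values as range, and $[\![\phi\gamma\Rightarrow\psi\gamma'\gamma]\!]=\mathsf{true}$. A constrained rewrite rule $\ell\to r~[\varphi]$: $\ell,r$ terms of the same sort, $\varphi$ a constraint, $\ell$ neither a theory term nor a variable; logical variables $\mathcal{LV}ar=\mathcal{V}ar(\varphi)\cup(\mathcal{V}ar(r)\setminus\mathcal{V}ar(\ell))$; $\gamma$ respects the rule if it maps logical variables to values and $[\![\varphi\gamma]\!]=\mathsf{true}$. $\mathcal{R}_{\mathit{calc}}=\{f(x_1,\ldots,x_n)\to y~[y=f(x_1,\ldots,x_n)]\mid f\in\Sigma_{\mathit{theory}}\setminus\mathrm{Val}\}$. $s\to_{\mathcal{R}}t$ iff there are a rule $\ell\to r~[\varphi]\in\mathcal{R}\cup\mathcal{R}_{\mathit{calc}}$,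 a position $p$, and $\gamma$ respecting the rule with $s|_p=\ell\gamma$, $t=s[r\gamma]_p$. Left-value-free: $\ell$ contains no value; left-TV-linear: each variable of theory sort occurs at most once in $\ell$. An $\exists$-term $(\exists\vec{x}:\eta.\ s)$ consists of a finite variable sequence $\vec{x}$, a satisfiable constraint $\eta$ and a term $s$ with $\{\vec x\}\subseteq\mathcal{V}ar(\eta)\cap\mathcal{V}ar(s)$; a constrained $\exists$-term $(\exists\vec{x}:\eta.\ s)~[\phi]$ adds a constraint $\phi$ with $\mathcal{V}ar(\eta)\setminus\{\vec x\}\subseteq\mathcal{V}ar(\phi)$. Constrained rewriting of constrained $\exists$-terms: $(\exists\vec{x}:\eta.\ s)~[\phi]\rightharpoonup_{\mathcal{R}}(\exists\vec{y}:\delta.\ t)~[\psi]$ iff (after renaming $\vec x$ so that $\{\vec x\}\cap\mathcal{V}ar(s,\phi)=\emptyset$) there exist a rule $\ell\to r~[\varphi]\in\mathcal{R}\cup\mathcal{R}_{\mathit{calc}}$, a position $p$ of $s$ and a substitution $\gamma$ such that: $s|_p=\ell\gamma$, $t=s[r\gamma]_p$, $\psi=\phi\land\varphi\gamma$; $x\gamma\in\mathrm{Val}\cup\mathcal{V}ar(\phi)$ for every $x\in\mathcal{V}ar(\varphi)\cap\mathcal{V}ar(\ell)$; $x\gamma\in\mathcal{V}\setminus(\mathcal{V}ar(s)\cup\{\vec x\})$ (a fresh variable) for every $x\in\mathcal{V}ar(\varphi)\setminus\mathcal{V}ar(\ell)$; $\phi\Rightarrow(\exists\vec z.\ \varphi\gamma)$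 is valid; and $(\exists\vec y.\ \delta)=(\exists\vec x,\vec z.\ (\eta\land\varphi\gamma))$, where $\{\vec z\}=\{x\gamma\mid x\in\mathcal{V}ar(\varphi)\setminus\mathcal{V}ar(\ell)\}$ ($\psi,\delta$ may be replaced by equivalent constraints). *)

From Stdlib Require Import List.
Import ListNotations.

Set Implicit Arguments.

(* Following the usual LCTRS convention, the universe of each theory sort
   is identified with the set of value constants of that sort, so that the
   interpretation of a theory symbol maps (lists of) values to a value. *)
Record lctrs := {
  sort : Type;
  fsym : Type;
  var : Type;
  vsort : var -> sort;
  fdom : fsym -> list sort;
  fcod : fsym -> sort;
  theory_sym : fsym -> Prop;
  value : fsym -> Prop;
  theory_sort : sort -> Prop;
  interp : fsym -> list fsym -> fsym;
  boolS : sort;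
  trueF : fsym; falseF : fsym;
  andF : fsym; implF : fsym;
  eqF : sort -> fsym;
  value_theory : forall v, value v -> theory_sym v /\ fdom v = [];
  theory_sym_sorts : forall f, theory_sym f ->
     theory_sort (fcod f) /\ Forall theory_sort (fdom f);
  interp_value : forall v, value v -> interp v [] = v;
  interp_sorted : forall f args, theory_sym f ->
     Forall2 (fun a s => value a /\ fcod a = s) args (fdom f) ->
     value (interp f args) /\ fcod (interp f args) = fcod f;
  bool_theory : theory_sort boolS;
  true_value : value trueF /\ fcod trueF = boolS;
  false_value : value falseF /\ fcod falseF = boolS;
  true_neq_false : trueF <> falseF;
  bool_values : forall v, value v -> fcod v = boolS -> v = trueF \/ v = falseF;
  and_sig : theory_sym andF /\ fdom andF = [boolS; boolS] /\ fcod andF = boolS;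
  and_sem : forall a b, value a -> fcod a = boolS -> value b -> fcod b = boolS ->
     (interp andF [a; b] = trueF <-> (a = trueF /\ b = trueF));
  impl_sig : theory_sym implF /\ fdom implF = [boolS; boolS] /\ fcod implF = boolS;
  impl_sem : forall a b, value a -> fcod a = boolS -> value b -> fcod b = boolS ->
     (interp implF [a; b] = trueF <-> (a = trueF -> b = trueF));
  eq_sig : forall i, theory_sort i ->
     theory_sym (eqF i) /\ fdom (eqF i) = [i; i] /\ fcod (eqF i) = boolS;
  eq_sem : forall i a b, theory_sort i ->
     value a -> fcod a = i -> value b -> fcod b = i ->
     (interp (eqF i) [a; b] = trueF <-> a = b)
}.

Section LCTRS.
Variable L : lctrs.

Inductive term : Type :=
| Var (x : var L)
| Fun (f : fsym L) (ts : list term).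

Fixpoint vars (t : term) : list (var L) :=
  match t with
  | Var x => [x]
  | Fun _ ts => flat_map vars ts
  end.

Fixpoint syms (t : term) : list (fsym L) :=
  match t with
  | Var _ => []
  | Fun f ts => f :: flat_map syms ts
  end.

Fixpoint subst (g : var L -> term) (t : term) : term :=
  match t with
  | Var x => g x
  | Fun f ts => Fun f (map (subst g) ts)
  end.

Fixpoint wsorted (t : term) (so : sort L) {struct t} : Prop :=
  match t with
  | Var x => vsort L x = so
  | Fun f ts => fcod L f = so /\
      (fix go (ts : list term) (ss : list (sort L)) {struct ts} : Prop :=
         match ts, ss with
         | [], [] => True
         | t :: ts', s :: ss' => wsorted t s /\ go ts' ss'
         | _, _ => False
         end) ts (fdom L f)
  end.

Definition subst_ok (g : var L -> term) : Prop :=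
  forall x, wsorted (g x) (vsort L x).

Definition theory_term (t : term) : Prop :=
  forall f, In f (syms t) -> theory_sym L f.

Definition constraint (c : term) : Prop :=
  theory_term c /\ wsorted c (boolS L).

(* [[ . ]] on ground theory terms (variables never reach it in our uses) *)
Fixpoint eval (t : term) : fsym L :=
  match t with
  | Var _ => falseF L
  | Fun f ts => interp L f (map eval ts)
  end.

Definition is_val (t : term) : Prop :=
  exists v, value L v /\ t = Fun v [].

Definition cand (a b : term) : term := Fun (andF L) [a; b].
Definition cimpl (a b : term) : term := Fun (implF L) [a; b].

Definition respects (g : var L -> term) (c : term) : Prop :=
  (forall x, In x (vars c) -> is_val (g x)) /\ eval (subst g c) = trueF L.

Definition satisfiable (c : term) : Prop :=
  exists g, subst_ok g /\ respects g c.

(* validity of  phi => (exists zs. psi) *)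
Definition valid_impl_ex (phi : term) (zs : list (var L)) (psi : term) : Prop :=
  forall g, subst_ok g ->
    (forall x, In x (vars phi) \/ (In x (vars psi) /\ ~ In x zs) -> is_val (g x)) ->
    exists g', subst_ok g' /\
      (forall x, ~ In x zs -> g' x = Var x) /\
      (forall x, In x zs -> is_val (g' x)) /\
      eval (subst g (cimpl phi (subst g' psi))) = trueF L.

Definition cequiv (c d : term) : Prop :=
  (forall x, In x (vars c) <-> In x (vars d)) /\
  forall g, subst_ok g -> (forall x, In x (vars c) -> is_val (g x)) ->
    (eval (subst g c) = trueF L <-> eval (subst g d) = trueF L).

(* psi is a constraint equivalent to  phi /\ (exists zs. chi) : its variables
   are the free variables of that formula, and it has the same truth value
   under every valuation of them into values. *)
Definition cequiv_and_ex (psi phi : term) (zs : list (var L)) (chi : term) : Prop :=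
  (forall x, In x (vars psi) <->
     (In x (vars phi) \/ (In x (vars chi) /\ ~ In x zs))) /\
  forall g, subst_ok g -> (forall x, In x (vars psi) -> is_val (g x)) ->
    (eval (subst g psi) = trueF L <->
     (eval (subst g phi) = trueF L /\
      exists g', subst_ok g' /\
        (forall x, ~ In x zs -> g' x = Var x) /\
        (forall x, In x zs -> is_val (g' x)) /\
        eval (subst g (subst g' chi)) = trueF L)).

Record rule := mkRule { lhs : term; rhs : term; cond : term }.

Definition wf_rule (rl : rule) : Prop :=
  (exists so, wsorted (lhs rl) so /\ wsorted (rhs rl) so) /\
  constraint (cond rl) /\
  ~ theory_term (lhs rl) /\
  (forall x, lhs rl <> Var x).

Definition left_value_free (l : term) : Prop :=
  forall f, In f (syms l) -> ~ value L f.

Definition left_TV_linear (l : term) : Prop :=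
  forall x, theory_sort L (vsort L x) ->
    forall l1 l2, vars l = l1 ++ x :: l2 -> ~ In x l2.

Definition calc_rule (rl : rule) : Prop :=
  exists f xs y,
    theory_sym L f /\ ~ value L f /\ NoDup xs /\
    map (vsort L) xs = fdom L f /\ ~ In y xs /\ vsort L y = fcod L f /\
    rl = mkRule (Fun f (map Var xs)) (Var y)
                (Fun (eqF L (fcod L f)) [Var y; Fun f (map Var xs)]).

Definition rule_of (R : rule -> Prop) (rl : rule) : Prop := R rl \/ calc_rule rl.

Definition respects_rule (g : var L -> term) (rl : rule) : Prop :=
  (forall x, In x (vars (cond rl)) \/
             (In x (vars (rhs rl)) /\ ~ In x (vars (lhs rl))) -> is_val (g x)) /\
  eval (subst g (cond rl)) = trueF L.

Inductive repl (u v : term) : term -> term -> Prop :=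
| repl_root : repl u v u v
| repl_arg : forall f ts1 a b ts2, repl u v a b ->
    repl u v (Fun f (ts1 ++ a :: ts2)) (Fun f (ts1 ++ b :: ts2)).

Definition step (R : rule -> Prop) (s t : term) : Prop :=
  exists rl g, rule_of R rl /\ subst_ok g /\ respects_rule g rl /\
    repl (subst g (lhs rl)) (subst g (rhs rl)) s t.

(* constrained exists-terms  (exists ebnd : eeta. ebody) [econ] *)
Record cterm := mkC { ebnd : list (var L); eeta : term; ebody : term; econ : term }.

Definition is_cterm (c : cterm) : Prop :=
  constraint (eeta c) /\ satisfiable (eeta c) /\
  (forall x, In x (ebnd c) -> In x (vars (eeta c)) /\ In x (vars (ebody c))) /\
  (exists so, wsorted (ebody c) so) /\
  constraint (econ c) /\
  (forall x, In x (vars (eeta c)) -> ~ In x (ebnd c) -> In x (vars (econ c))).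

(* one step, for a representative whose bound variables are already chosen *)
Definition basic_cstep (R : rule -> Prop) (c d : cterm) : Prop :=
  exists rl g zs,
    rule_of R rl /\ subst_ok g /\
    repl (subst g (lhs rl)) (subst g (rhs rl)) (ebody c) (ebody d) /\
    (forall x, In x (vars (cond rl)) -> In x (vars (lhs rl)) ->
       is_val (g x) \/ exists w, g x = Var w /\ In w (vars (econ c))) /\
    (forall x, In x (vars (cond rl)) -> ~ In x (vars (lhs rl)) ->
       exists w, g x = Var w /\ ~ In w (vars (ebody c)) /\ ~ In w (ebnd c)) /\
    (forall w, In w zs <->
       exists x, In x (vars (cond rl)) /\ ~ In x (vars (lhs rl)) /\ g x = Var w) /\
    valid_impl_ex (econ c) zs (subst g (cond rl)) /\
    cequiv_and_ex (econ d) (econ c) zs (subst g (cond rl)) /\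
    (* (exists ys. delta) = (exists xs, zs. (eta /\ phi gamma)) *)
    (forall w, In w (ebnd d) <-> In w (ebnd c) \/ In w zs) /\
    cequiv (eeta d) (cand (eeta c) (subst g (cond rl))).

Definition rename_bound (rho : var L -> var L) (c : cterm) : cterm :=
  mkC (map rho (ebnd c)) (subst (fun v => Var (rho v)) (eeta c))
      (subst (fun v => Var (rho v)) (ebody c)) (econ c).

Definition good_renaming (rho : var L -> var L) (c : cterm) : Prop :=
  (forall v, ~ In v (ebnd c) -> rho v = v) /\
  (forall v, vsort L (rho v) = vsort L v) /\
  (forall a b, In a (ebnd c) -> In b (ebnd c) -> rho a = rho b -> a = b) /\
  (forall a, In a (ebnd c) ->
     ~ In (rho a) (vars (econ c)) /\
     (In (rho a) (vars (ebody c)) -> In (rho a) (ebnd c)) /\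
     (In (rho a) (vars (eeta c)) -> In (rho a) (ebnd c))).

Definition cstep (R : rule -> Prop) (c d : cterm) : Prop :=
  exists rho, good_renaming rho c /\ basic_cstep R (rename_bound rho c) d.

End LCTRS.

(* Both directions work with the representative whose bound variables are
   renamed apart, where the constrained step is an instance argument.
   Backwards, an instance [sigma] of the result satisfies the renamed [eta] and
   [phi gamma] because [delta] is equivalent to [eta /\ phi gamma], and [phi]
   because [psi] is equivalent to [phi /\ exists zs. phi gamma]; hence
   [sigma o gamma] respects the rule.  Forwards, an instance [theta] is
   transported along the renaming and then changed only on the fresh variables
   [zs], using the validity of [phi => exists zs. phi gamma]; the result
   satisfies [psi] and [delta], and is still an instance of the same [s]
   because [zs] does not occur in [s]. *)

From Stdlib Require Import List ClassicalEpsilon.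
Import ListNotations.
Set Implicit Arguments.

Section Terms.
Context {L : lctrs}.
Implicit Types (g h : var L -> term L) (t : term L).

Definition term_nested_ind (P : term L -> Prop)
  (HV : forall x, P (Var L x)) (HF : forall f ts, Forall P ts -> P (Fun f ts)) :
  forall t, P t :=
  fix F t := match t with
  | Var _ x => HV x
  | Fun f ts => HF f ts ((fix G (us : list (term L)) : Forall P us :=
        match us with
        | [] => Forall_nil P
        | u :: us' => Forall_cons u (F u) (G us')
        end) ts)
  end.

Lemma subst_comp g h t :
  subst g (subst h t) = subst (fun x => subst g (h x)) t.
Proof.
  induction t as [x|f ts IH] using term_nested_ind; simpl; auto.
  f_equal. rewrite map_map. apply map_ext_in. intros u Hu.
  rewrite Forall_forall in IH. auto.
Qed.

Lemma subst_ext g h t :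
  (forall x, In x (vars t) -> g x = h x) -> subst g t = subst h t.
Proof.
  induction t as [x|f ts IH] using term_nested_ind; simpl; intros Hgh.
  - apply Hgh; simpl; auto.
  - f_equal. apply map_ext_in. intros u Hu.
    rewrite Forall_forall in IH. apply IH; auto.
    intros x Hx. apply Hgh, in_flat_map. eauto.
Qed.

Lemma in_vars_subst g t w :
  In w (vars (subst g t)) <-> exists x, In x (vars t) /\ In w (vars (g x)).
Proof.
  induction t as [x|f ts IH] using term_nested_ind; simpl.
  - split; [eauto|]. intros [y [[<-|[]] Hy]]; auto.
  - rewrite Forall_forall in IH. rewrite in_flat_map. split.
    + intros [u [Hu Hw]]. apply in_map_iff in Hu. destruct Hu as [v [<- Hv]].
      apply IH in Hw; auto. destruct Hw as [x [Hx Hwx]].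
      exists x. split; auto. apply in_flat_map. eauto.
    + intros [x [Hx Hwx]]. apply in_flat_map in Hx. destruct Hx as [v [Hv Hxv]].
      exists (subst g v). split; [apply in_map; auto|]. apply IH; eauto.
Qed.

Lemma subst_is_val g t : is_val t -> subst g t = t.
Proof. intros [v [_ ->]]. reflexivity. Qed.

Lemma is_val_theory_term t : is_val t -> theory_term t.
Proof.
  intros [v [Hv ->]] f [<-|[]]. apply (value_theory L v Hv).
Qed.

Lemma theory_term_Var x : theory_term (Var L x).
Proof. intros f []. Qed.

Lemma theory_term_subst g t :
  theory_term t -> (forall x, In x (vars t) -> theory_term (g x)) ->
  theory_term (subst g t).
Proof.
  induction t as [x|f ts IH] using term_nested_ind; simpl; intros Ht Hg.
  - apply Hg. simpl; auto.
  - rewrite Forall_forall in IH. intros f' [<-|Hf'].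
    + apply Ht. simpl; auto.
    + apply in_flat_map in Hf'. destruct Hf' as [u' [Hu' Hf']].
      apply in_map_iff in Hu'. destruct Hu' as [u [<- Hu]].
      refine (IH u Hu _ _ f' Hf').
      * intros f'' Hf''. apply Ht. simpl. right. apply in_flat_map. eauto.
      * intros x Hx. apply Hg, in_flat_map. eauto.
Qed.

Lemma wsorted_Fun f (ts : list (term L)) so :
  wsorted (Fun f ts) so <-> fcod L f = so /\ Forall2 (@wsorted L) ts (fdom L f).
Proof.
  simpl. split; intros [Hf Hts]; split; auto; revert Hts; generalize (fdom L f).
  - induction ts as [|u ts IH]; intros [|so' sos]; simpl; try tauto.
    + constructor.
    + intros [Hu Hts]. constructor; auto.
  - induction ts as [|u ts IH]; intros sos Hts; inversion Hts as [|? ? ? ? Hu Hrest]; subst; simpl; auto.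
    split; [exact Hu|exact (IH _ Hrest)].
Qed.

Lemma wsorted_subst g t so : subst_ok g -> wsorted t so -> wsorted (subst g t) so.
Proof.
  intros Hg. revert so.
  induction t as [x|f ts IH] using term_nested_ind; intros so Ht.
  - simpl in Ht. subst. apply Hg.
  - change (subst g (Fun f ts)) with (Fun f (map (subst g) ts)).
    rewrite wsorted_Fun in *. destruct Ht as [Hf Hts]. split; auto.
    clear Hf. induction Hts; simpl; constructor; inversion IH; auto.
Qed.

Lemma subst_ok_comp g h : subst_ok g -> subst_ok h -> subst_ok (fun x => subst g (h x)).
Proof. intros Hg Hh x. apply wsorted_subst; auto. Qed.

Lemma subst_ok_rename (rho : var L -> var L) :
  (forall v, vsort L (rho v) = vsort L v) -> subst_ok (fun v => Var L (rho v)).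
Proof. intros Hrho v. apply Hrho. Qed.

Lemma constraint_subst g t :
  constraint t -> subst_ok g -> (forall x, In x (vars t) -> theory_term (g x)) ->
  constraint (subst g t).
Proof.
  intros [Ht Hw] Hg Hgt. split.
  - apply theory_term_subst; auto.
  - apply wsorted_subst; auto.
Qed.

Lemma eval_subst_typed g t so :
  theory_term t -> wsorted t so -> (forall x, In x (vars t) -> is_val (g x)) ->
  subst_ok g -> value L (eval (subst g t)) /\ fcod L (eval (subst g t)) = so.
Proof.
  intros Ht Hw Hv Hg. revert so Ht Hw Hv.
  induction t as [x|f ts IH] using term_nested_ind; intros so Ht Hw Hv.
  - simpl in *. destruct (Hv x (or_introl eq_refl)) as [v [Hvv Hgx]].
    pose proof (Hg x) as Hs. rewrite Hgx in *. simpl.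
    rewrite interp_value; auto. split; auto.
    apply wsorted_Fun in Hs. destruct Hs; congruence.
  - apply wsorted_Fun in Hw. destruct Hw as [Hf Hts].
    simpl. rewrite <- Hf. apply interp_sorted; [apply Ht; simpl; auto|].
    assert (Hsub : forall u, In u ts ->
              theory_term u /\ (forall x, In x (vars u) -> is_val (g x))).
    { intros u Hu. split.
      - intros f' Hf'. apply Ht. simpl. right. apply in_flat_map. eauto.
      - intros x Hx. apply Hv. simpl. apply in_flat_map. eauto. }
    rewrite map_map. clear Hf Ht Hv.
    induction Hts as [|u so' ts sos Hu Hts IHts]; simpl; constructor;
      inversion IH as [|? ? IHu IHrest]; subst.
    + apply IHu; auto; apply Hsub; simpl; auto.
    + apply IHts; auto. intros u' Hu'. apply Hsub. simpl; auto.
Qed.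

Lemma repl_subst g u v s t :
  repl u v s t -> repl (subst g u) (subst g v) (subst g s) (subst g t).
Proof.
  induction 1; simpl; [constructor|].
  rewrite !map_app. simpl. constructor. auto.
Qed.

End Terms.

Section Constraints.
Context {L : lctrs}.
Implicit Types (g h : var L -> term L) (a b psi phi chi : term L).

Lemma in_vars_cand a b x :
  In x (vars (cand a b)) <-> In x (vars a) \/ In x (vars b).
Proof. simpl. rewrite app_nil_r, in_app_iff. tauto. Qed.

Lemma respects_ext g h a :
  respects g a -> (forall x, In x (vars a) -> g x = h x) -> respects h a.
Proof.
  intros [Hv He] Hgh. split.
  - intros x Hx. rewrite <- Hgh; auto.
  - rewrite <- (subst_ext g h a); auto.
Qed.

Lemma respects_rename g (rho : var L -> var L) a :
  respects g (subst (fun v => Var L (rho v)) a) <-> respects (fun v => g (rho v)) a.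
Proof.
  unfold respects. rewrite subst_comp. simpl. split; intros [Hv He]; split; auto.
  - intros x Hx. apply Hv, in_vars_subst. exists x. simpl; auto.
  - intros w Hw. apply in_vars_subst in Hw. destruct Hw as [x [Hx [<-|[]]]]. auto.
Qed.

Lemma respects_cand g a b :
  constraint a -> constraint b -> subst_ok g ->
  respects g (cand a b) <-> respects g a /\ respects g b.
Proof.
  intros [Ta Wa] [Tb Wb] Hg. unfold respects.
  setoid_rewrite in_vars_cand.
  split.
  - intros [Hv He].
    assert (Hva : forall x, In x (vars a) -> is_val (g x)) by auto.
    assert (Hvb : forall x, In x (vars b) -> is_val (g x)) by auto.
    destruct (eval_subst_typed _ Ta Wa Hva Hg), (eval_subst_typed _ Tb Wb Hvb Hg).
    apply and_sem in He; auto. tauto.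
  - intros [[Hva Hea] [Hvb Heb]].
    destruct (eval_subst_typed _ Ta Wa Hva Hg), (eval_subst_typed _ Tb Wb Hvb Hg).
    split; [intros x [Hx|Hx]; auto|]. apply and_sem; auto.
Qed.

Lemma respects_cimpl g a b :
  constraint a -> constraint b -> subst_ok g -> respects g a ->
  (forall x, In x (vars b) -> is_val (g x)) ->
  eval (subst g (cimpl a b)) = trueF L -> respects g b.
Proof.
  intros [Ta Wa] [Tb Wb] Hg [Hva Hea] Hvb He. split; auto.
  destruct (eval_subst_typed _ Ta Wa Hva Hg) as [Va Sa].
  destruct (eval_subst_typed _ Tb Wb Hvb Hg) as [Vb Sb].
  exact (proj1 (impl_sem L _ _ Va Sa Vb Sb) He Hea).
Qed.

Lemma respects_cequiv g a b :
  cequiv a b -> subst_ok g -> (respects g a <-> respects g b).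
Proof.
  intros [Hvars Heval] Hg. unfold respects.
  split; intros [Hv He]; split.
  - intros x Hx. apply Hv, Hvars, Hx.
  - apply (Heval g Hg Hv), He.
  - intros x Hx. apply Hv, Hvars, Hx.
  - apply (Heval g Hg); [intros x Hx; apply Hv, Hvars, Hx | exact He].
Qed.

Lemma respects_cequiv_and_ex_inv g psi phi zs chi :
  cequiv_and_ex psi phi zs chi -> subst_ok g -> respects g psi -> respects g phi.
Proof.
  intros [Hvars Heval] Hg [Hv He]. split.
  - intros x Hx. apply Hv, Hvars. auto.
  - apply (Heval g Hg Hv), He.
Qed.

Lemma respects_cequiv_and_ex g psi phi zs chi :
  cequiv_and_ex psi phi zs chi -> subst_ok g -> respects g phi ->
  (forall x, In x zs -> is_val (g x)) -> respects g chi -> respects g psi.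
Proof.
  intros [Hvars Heval] Hg [Hvphi Hephi] Hvzs [Hvchi Hechi].
  assert (Hv : forall x, In x (vars psi) -> is_val (g x)).
  { intros x Hx. apply Hvars in Hx. destruct Hx as [Hx|[Hx _]]; auto. }
  split; [exact Hv|]. apply (Heval g Hg Hv). split; [exact Hephi|].
  set (g' := fun x => if excluded_middle_informative (In x zs) then g x else Var L x).
  exists g'. unfold g'. split; [|split; [|split]].
  - intros x. destruct (excluded_middle_informative _); [apply Hg|reflexivity].
  - intros x Hx. destruct (excluded_middle_informative _); [contradiction|reflexivity].
  - intros x Hx. destruct (excluded_middle_informative _); [auto|contradiction].
  - rewrite subst_comp, <- Hechi. f_equal. apply subst_ext. intros x _.
    destruct (excluded_middle_informative _); [apply subst_is_val|]; auto.
Qed.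

Lemma valid_impl_ex_extend g phi zs chi :
  constraint phi -> constraint chi -> valid_impl_ex phi zs chi ->
  subst_ok g -> respects g phi ->
  (forall x, In x (vars chi) -> ~ In x zs -> is_val (g x)) ->
  exists g', subst_ok g' /\ (forall x, ~ In x zs -> g' x = g x) /\
    (forall x, In x zs -> is_val (g' x)) /\ respects g' chi.
Proof.
  intros Hphi Hchi Hvalid Hg Hgphi Hgchi.
  destruct (Hvalid g Hg) as [h [Hh [Hh_id [Hh_zs Himpl]]]].
  { intros x [Hx|[Hx Hnx]]; [apply Hgphi|apply Hgchi]; auto. }
  assert (Hh_shape : forall x, is_val (h x) \/ h x = Var L x /\ ~ In x zs).
  { intros x. destruct (classic (In x zs)); [left|right]; auto. }
  exists (fun x => subst g (h x)). split; [|split; [|split]].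
  - apply subst_ok_comp; auto.
  - intros x Hx. rewrite Hh_id; auto.
  - intros x Hx. rewrite subst_is_val; auto.
  - assert (Hchi_h : respects g (subst h chi)).
    { apply (respects_cimpl Hphi); auto.
      - apply constraint_subst; auto. intros x _.
        destruct (Hh_shape x) as [Hv|[-> _]];
          [apply is_val_theory_term, Hv|apply theory_term_Var].
      - intros w Hw. apply in_vars_subst in Hw. destruct Hw as [x [Hx Hw]].
        destruct (Hh_shape x) as [[v [_ Hv]]|[Hv Hnx]]; rewrite Hv in Hw.
        + destruct Hw.
        + destruct Hw as [<-|[]]. auto. }
    destruct Hchi_h as [_ He]. rewrite subst_comp in He. split; [|exact He].
    intros x Hx. destruct (Hh_shape x) as [Hv|[-> Hnx]].
    + rewrite subst_is_val; auto.
    + apply Hgchi; auto.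
Qed.

End Constraints.

Section Rewriting.
Variables (L : lctrs) (R : rule L -> Prop).
Hypothesis HRwf : forall rl, R rl -> wf_rule rl.
Hypothesis HRvars : forall rl, R rl -> incl (vars (rhs rl)) (vars (lhs rl) ++ vars (cond rl)).

Lemma rule_cond_constraint rl : rule_of R rl -> constraint (cond rl).
Proof.
  intros [Hrl|[f [xs [y [Hf [_ [_ [Hxs [_ [Hy ->]]]]]]]]]]; [apply HRwf, Hrl|].
  destruct (theory_sym_sorts L f Hf) as [Hcod _].
  destruct (eq_sig L _ Hcod) as [Heq [Heq_dom Heq_cod]].
  split; simpl.
  - intros g [<-|Hg]; [exact Heq|].
    destruct Hg as [<-|Hg]; [exact Hf|]. exfalso. clear -Hg.
    induction xs; simpl in *; auto.
  - split; [exact Heq_cod|]. rewrite Heq_dom. repeat split; auto.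
    rewrite <- Hxs. clear. induction xs; simpl; auto.
Qed.

Lemma rule_rhs_vars rl :
  rule_of R rl ->
  forall x, In x (vars (rhs rl)) -> ~ In x (vars (lhs rl)) -> In x (vars (cond rl)).
Proof.
  intros [Hrl|[f [xs [y [_ [_ [_ [_ [_ [_ ->]]]]]]]]]] x Hx Hnx.
  - apply HRvars, in_app_or in Hx; [tauto|exact Hrl].
  - destruct Hx as [<-|[]]. simpl; auto.
Qed.

Lemma step_instance rl ga g s t :
  rule_of R rl -> subst_ok ga ->
  (forall x, In x (vars (cond rl)) -> is_val (ga x) \/ exists w, ga x = Var L w) ->
  repl (subst ga (lhs rl)) (subst ga (rhs rl)) s t ->
  subst_ok g -> respects g (subst ga (cond rl)) ->
  step R (subst g s) (subst g t).
Proof.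
  intros Hrl Hga Hshape Hrepl Hg [Hv He].
  assert (Hcond_val : forall x, In x (vars (cond rl)) -> is_val (subst g (ga x))).
  { intros x Hx. destruct (Hshape x Hx) as [Hval|[w Hw]].
    - rewrite subst_is_val; auto.
    - rewrite Hw. apply Hv, in_vars_subst. exists x. rewrite Hw. simpl; auto. }
  exists rl, (fun x => subst g (ga x)). split; [exact Hrl|split; [|split]].
  - apply subst_ok_comp; auto.
  - split; [|rewrite <- subst_comp; exact He].
    intros x [Hx|[Hx Hnx]]; apply Hcond_val; auto.
    apply (rule_rhs_vars Hrl); auto.
  - rewrite <- !subst_comp. apply repl_subst, Hrepl.
Qed.

Definition forward_simulation (c d : cterm L) : Prop :=
  forall theta, subst_ok theta -> respects theta (cand (econ c) (eeta c)) ->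
    exists sigma, subst_ok sigma /\ respects sigma (cand (econ d) (eeta d)) /\
      step R (subst theta (ebody c)) (subst sigma (ebody d)).

Definition backward_simulation (c d : cterm L) : Prop :=
  forall sigma, subst_ok sigma -> respects sigma (cand (econ d) (eeta d)) ->
    exists theta, subst_ok theta /\ respects theta (cand (econ c) (eeta c)) /\
      step R (subst theta (ebody c)) (subst sigma (ebody d)).

Section BasicStep.
Variables (c d : cterm L) (rl : rule L) (ga : var L -> term L) (zs : list (var L)).
Hypothesis Hrl : rule_of R rl.
Hypothesis Hga : subst_ok ga.
Hypothesis Hrepl : repl (subst ga (lhs rl)) (subst ga (rhs rl)) (ebody c) (ebody d).
Hypothesis Hga_lhs : forall x, In x (vars (cond rl)) -> In x (vars (lhs rl)) ->
  is_val (ga x) \/ exists w, ga x = Var L w /\ In w (vars (econ c)).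
Hypothesis Hga_fresh : forall x, In x (vars (cond rl)) -> ~ In x (vars (lhs rl)) ->
  exists w, ga x = Var L w /\ ~ In w (vars (ebody c)) /\ ~ In w (ebnd c).
Hypothesis Hzs : forall w, In w zs <->
  exists x, In x (vars (cond rl)) /\ ~ In x (vars (lhs rl)) /\ ga x = Var L w.
Hypothesis Hvalid : valid_impl_ex (econ c) zs (subst ga (cond rl)).
Hypothesis Hpsi : cequiv_and_ex (econ d) (econ c) zs (subst ga (cond rl)).
Hypothesis Hbnd : forall w, In w (ebnd d) <-> In w (ebnd c) \/ In w zs.
Hypothesis Hdelta : cequiv (eeta d) (cand (eeta c) (subst ga (cond rl))).
Hypothesis Hc_phi : constraint (econ c).
Hypothesis Hc_eta : constraint (eeta c).
Hypothesis Hc_eta_vars : forall x, In x (vars (eeta c)) -> ~ In x (ebnd c) -> In x (vars (econ c)).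
Hypothesis Hd_psi : constraint (econ d).
Hypothesis Hd_delta : constraint (eeta d).
Hypothesis Hd_bnd : forall y, In y (ebnd d) -> ~ In y (vars (econ d)).

Lemma ga_cond_var x : In x (vars (cond rl)) ->
  is_val (ga x) \/ exists w, ga x = Var L w /\ (In w zs \/ In w (vars (econ c))).
Proof.
  intros Hx. destruct (classic (In x (vars (lhs rl)))) as [Hl|Hl].
  - destruct (Hga_lhs x Hx Hl) as [Hv|[w [Hw Hphi]]]; eauto.
  - destruct (Hga_fresh x Hx Hl) as [w [Hw _]]. right. exists w.
    split; [exact Hw|]. left. apply Hzs. eauto.
Qed.

Lemma in_vars_cond_instance w :
  In w (vars (subst ga (cond rl))) -> In w zs \/ In w (vars (econ c)).
Proof.
  intros Hw. apply in_vars_subst in Hw. destruct Hw as [x [Hx Hw]].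
  destruct (ga_cond_var x Hx) as [[v [_ Hv]]|[w' [Hw' Hin]]]; rewrite ?Hv, ?Hw' in Hw.
  - destruct Hw.
  - destruct Hw as [<-|[]]. exact Hin.
Qed.

Lemma cond_instance_constraint : constraint (subst ga (cond rl)).
Proof.
  apply constraint_subst; [apply rule_cond_constraint, Hrl|exact Hga|].
  intros x Hx. destruct (ga_cond_var x Hx) as [Hv|[w [-> _]]].
  - apply is_val_theory_term, Hv.
  - apply theory_term_Var.
Qed.

Lemma zs_notin_econ w : In w zs -> ~ In w (vars (econ c)).
Proof.
  intros Hw Hphi. apply (Hd_bnd w); [apply Hbnd; auto|apply Hpsi; auto].
Qed.

Lemma zs_fresh w : In w zs -> ~ In w (vars (ebody c)) /\ ~ In w (vars (eeta c)).
Proof.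
  intros Hw. pose proof (zs_notin_econ w Hw) as Hphi.
  apply Hzs in Hw. destruct Hw as [x [Hx [Hnx Hga_x]]].
  destruct (Hga_fresh x Hx Hnx) as [w' [Hw' [Hs Hb]]].
  rewrite Hga_x in Hw'. injection Hw' as <-.
  split; [exact Hs|]. intros Heta. apply Hphi, Hc_eta_vars; auto.
Qed.

Lemma step_cond_instance g : subst_ok g -> respects g (subst ga (cond rl)) ->
  step R (subst g (ebody c)) (subst g (ebody d)).
Proof.
  apply (step_instance Hrl Hga); [|exact Hrepl].
  intros x Hx. destruct (ga_cond_var x Hx) as [Hv|[w [Hw _]]]; eauto.
Qed.

Lemma basic_cstep_forward : forward_simulation c d.
Proof.
  intros theta Htheta Hrespects.
  apply respects_cand in Hrespects; auto. destruct Hrespects as [Hphi Heta].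
  destruct (valid_impl_ex_extend Hc_phi cond_instance_constraint Hvalid Htheta Hphi)
    as [sigma [Hsigma [Hsigma_theta [Hsigma_zs Hsigma_cond]]]].
  { intros x Hx Hnx. destruct (in_vars_cond_instance x Hx); [contradiction|].
    apply Hphi; auto. }
  assert (Hagree : forall t, (forall w, In w zs -> ~ In w (vars t)) ->
                     forall w, In w (vars t) -> theta w = sigma w).
  { intros t Ht w Hw. symmetry. apply Hsigma_theta. intros Hz. exact (Ht w Hz Hw). }
  assert (Hphi' : respects sigma (econ c)).
  { eapply respects_ext; [exact Hphi|]. apply Hagree, zs_notin_econ. }
  assert (Heta' : respects sigma (eeta c)).
  { eapply respects_ext; [exact Heta|]. apply Hagree. intros w Hw. apply (zs_fresh w Hw). }
  exists sigma. split; [exact Hsigma|split].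
  - apply respects_cand; auto. split.
    + apply (respects_cequiv_and_ex Hpsi); auto.
    + apply (respects_cequiv Hdelta Hsigma), respects_cand; auto.
      apply cond_instance_constraint.
  - rewrite (subst_ext theta sigma (ebody c)).
    + apply step_cond_instance; auto.
    + apply Hagree. intros w Hw. apply (zs_fresh w Hw).
Qed.

Lemma basic_cstep_backward : backward_simulation c d.
Proof.
  intros sigma Hsigma Hrespects.
  apply respects_cand in Hrespects; auto. destruct Hrespects as [Hpsi' Hdelta'].
  apply (respects_cequiv Hdelta Hsigma), respects_cand in Hdelta';
    auto using cond_instance_constraint.
  destruct Hdelta' as [Heta Hcond].
  exists sigma. split; [exact Hsigma|split].
  - apply respects_cand; auto. split; [|exact Heta].
    apply (respects_cequiv_and_ex_inv Hpsi Hsigma Hpsi').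
  - apply step_cond_instance; auto.
Qed.

End BasicStep.

Lemma basic_cstep_simulation c d :
  constraint (econ c) -> constraint (eeta c) ->
  (forall x, In x (vars (eeta c)) -> ~ In x (ebnd c) -> In x (vars (econ c))) ->
  constraint (econ d) -> constraint (eeta d) ->
  (forall y, In y (ebnd d) -> ~ In y (vars (econ d))) ->
  basic_cstep R c d -> forward_simulation c d /\ backward_simulation c d.
Proof.
  intros Hc_phi Hc_eta Hc_eta_vars Hd_psi Hd_delta Hd_bnd
    [rl [ga [zs [Hrl [Hga [Hrepl [Hga_lhs [Hga_fresh [Hzs [Hvalid [Hpsi [Hbnd Hdelta]]]]]]]]]]]].
  split; [eapply basic_cstep_forward|eapply basic_cstep_backward]; eassumption.
Qed.

Section Renaming.
Variables (c : cterm L) (rho : var L -> var L).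
Hypothesis Hrho : good_renaming rho c.

Lemma rename_bound_inverse theta : subst_ok theta ->
  exists theta', subst_ok theta' /\
    (forall v, In v (vars (ebody c)) \/ In v (vars (eeta c)) -> theta' (rho v) = theta v) /\
    (forall v, In v (vars (econ c)) -> theta' v = theta v).
Proof.
  intros Htheta. destruct Hrho as [Hid [Hsort [Hinj Hfresh]]].
  set (theta' := fun w =>
    match excluded_middle_informative (exists a, In a (ebnd c) /\ rho a = w) with
    | left H => theta (proj1_sig (constructive_indefinite_description _ H))
    | right _ => theta w
    end).
  assert (Hbound : forall a, In a (ebnd c) -> theta' (rho a) = theta a).
  { intros a Ha. unfold theta'. destruct (excluded_middle_informative _) as [H|H].
    - destruct (constructive_indefinite_description _ H) as [b [Hb Hab]]. simpl.
      f_equal. apply Hinj; auto.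
    - exfalso. apply H. eauto. }
  assert (Hfree : forall w, (forall a, In a (ebnd c) -> rho a <> w) -> theta' w = theta w).
  { intros w Hw. unfold theta'. destruct (excluded_middle_informative _) as [[a [Ha Haw]]|H].
    - exfalso. exact (Hw a Ha Haw).
    - reflexivity. }
  exists theta'. split; [|split].
  - intros w. unfold theta'. destruct (excluded_middle_informative _) as [H|H]; [|apply Htheta].
    destruct (constructive_indefinite_description _ H) as [b [Hb <-]]. simpl.
    rewrite Hsort. apply Htheta.
  - intros v Hv. destruct (classic (In v (ebnd c))) as [Hb|Hb]; [auto|].
    rewrite (Hid v Hb). apply Hfree. intros a Ha Hav. apply Hb.
    destruct (Hfresh a Ha) as [_ [Hs He]]. rewrite <- Hav.
    rewrite <- Hav in Hv. destruct Hv; auto.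
  - intros v Hv. apply Hfree. intros a Ha Hav.
    apply (proj1 (Hfresh a Ha)). rewrite Hav. exact Hv.
Qed.

Lemma rename_bound_eeta_constraint :
  constraint (eeta c) -> constraint (eeta (rename_bound rho c)).
Proof.
  intros Heta. apply constraint_subst; [exact Heta| |intros; apply theory_term_Var].
  apply subst_ok_rename, Hrho.
Qed.

Lemma rename_bound_eeta_vars :
  (forall x, In x (vars (eeta c)) -> ~ In x (ebnd c) -> In x (vars (econ c))) ->
  forall x, In x (vars (eeta (rename_bound rho c))) -> ~ In x (ebnd (rename_bound rho c)) ->
    In x (vars (econ (rename_bound rho c))).
Proof.
  destruct Hrho as [Hid _]. simpl. intros Heta_vars w Hw Hnb.
  apply in_vars_subst in Hw. destruct Hw as [v [Hv [Hvw|[]]]]. subst w.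
  destruct (classic (In v (ebnd c))) as [Hb|Hb].
  - exfalso. apply Hnb, in_map, Hb.
  - rewrite Hid; auto.
Qed.

Lemma forward_simulation_rename_bound d :
  constraint (econ c) -> constraint (eeta c) ->
  forward_simulation (rename_bound rho c) d -> forward_simulation c d.
Proof.
  intros Hphi Heta Hfw theta Htheta Hresp.
  apply respects_cand in Hresp; auto. destruct Hresp as [Hth_phi Hth_eta].
  destruct (rename_bound_inverse Htheta) as [theta' [Htheta' [Hren Hphi_eq]]].
  destruct (Hfw theta' Htheta') as [sigma [Hsigma [Hsigma_d Hstep]]].
  - apply respects_cand; auto using rename_bound_eeta_constraint. split.
    + eapply respects_ext; [exact Hth_phi|]. intros v Hv. symmetry; auto.
    + apply respects_rename. eapply respects_ext; [exact Hth_eta|].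
      intros v Hv. symmetry; auto.
  - exists sigma. split; [exact Hsigma|split; [exact Hsigma_d|]].
    simpl in Hstep. rewrite subst_comp in Hstep. simpl in Hstep.
    rewrite (subst_ext _ theta (ebody c)) in Hstep; auto.
Qed.

Lemma backward_simulation_rename_bound d :
  constraint (econ c) -> constraint (eeta c) ->
  (forall x, In x (ebnd c) -> ~ In x (vars (econ c))) ->
  backward_simulation (rename_bound rho c) d -> backward_simulation c d.
Proof.
  destruct Hrho as [Hid [Hsort _]].
  intros Hphi Heta Hbnd Hbw sigma Hsigma Hsigma_d.
  destruct (Hbw sigma Hsigma Hsigma_d) as [theta' [Htheta' [Hresp Hstep]]].
  apply respects_cand in Hresp; auto using rename_bound_eeta_constraint.
  destruct Hresp as [Hth_phi Hth_eta].
  exists (fun v => theta' (rho v)).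
  assert (Htheta : subst_ok (fun v => theta' (rho v)))
    by exact (subst_ok_comp Htheta' (subst_ok_rename rho Hsort)).
  split; [exact Htheta|split].
  - apply respects_cand; auto. split.
    + eapply respects_ext; [exact Hth_phi|]. intros v Hv.
      rewrite Hid; auto. intros Hb. exact (Hbnd v Hb Hv).
    + apply respects_rename, Hth_eta.
  - simpl in Hstep. rewrite subst_comp in Hstep. exact Hstep.
Qed.

End Renaming.
End Rewriting.

Theorem theorem3 (L : lctrs) (R : rule L -> Prop)
  (HRwf : forall rl, R rl -> wf_rule rl)
  (HRvars : forall rl, R rl -> incl (vars (rhs rl)) (vars (lhs rl) ++ vars (cond rl)))
  (HRlvf : forall rl, R rl -> left_value_free (lhs rl))
  (HRltv : forall rl, R rl -> left_TV_linear (lhs rl))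
  (c d : cterm L) (Hc : is_cterm c) (Hd : is_cterm d)
  (Hcx : forall x, In x (ebnd c) -> ~ In x (vars (econ c)))
  (Hdy : forall y, In y (ebnd d) -> ~ In y (vars (econ d)))
  (Hstep : cstep R c d) :
  (forall theta, subst_ok theta -> respects theta (cand (econ c) (eeta c)) ->
     exists sigma, subst_ok sigma /\ respects sigma (cand (econ d) (eeta d)) /\
       step R (subst theta (ebody c)) (subst sigma (ebody d))) /\
  (forall sigma, subst_ok sigma -> respects sigma (cand (econ d) (eeta d)) ->
     exists theta, subst_ok theta /\ respects theta (cand (econ c) (eeta c)) /\
       step R (subst theta (ebody c)) (subst sigma (ebody d))).
Proof.
  destruct Hstep as [rho [Hrho Hbasic]].
  destruct Hc as [Hc_eta [_ [_ [_ [Hc_phi Hc_eta_vars]]]]].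
  destruct Hd as [Hd_delta [_ [_ [_ [Hd_psi _]]]]].
  destruct (basic_cstep_simulation HRwf HRvars
              (c := rename_bound rho c) Hc_phi
              (rename_bound_eeta_constraint Hrho Hc_eta)
              (rename_bound_eeta_vars Hrho Hc_eta_vars)
              Hd_psi Hd_delta Hdy Hbasic) as [Hfw Hbw].
  split.
  - exact (forward_simulation_rename_bound Hrho Hc_phi Hc_eta Hfw).
  - exact (backward_simulation_rename_bound Hrho Hc_phi Hc_eta Hcx Hbw).
Qed.
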